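(* For all $k,m\in\mathbf N$, $$\sum_{i=1}^{k-1}(-1)^{k-1-i}\sum_{d\mid m}\alpha_i(d)=\alpha_k(m)+(-1)^k\alpha_1(m).$$
   Context: For $k,m\in\mathbf N=\{1,2,\dots\}$, $\alpha_k(m)$ is the number of $k$-tuples $(m_1,\dots,m_k)$ of integers $m_i\ge2$ with $m_1m_2\cdots m_k=m$. The inner sum is over positive divisors $d$ of $m$. *)

From mathcomp Require Import all_boot all_order all_algebra.
Set Implicit Arguments. Unset Strict Implicit. Unset Printing Implicit Defensive.

(* alpha k m = number of k-tuples (m_1,...,m_k) of integers m_i >= 2 with
   m_1 * ... * m_k = m.  For m >= 1 every such m_i divides m, hence m_i <= m,
   so it suffices to enumerate tuples with entries in {0,...,m}. *)
Definition alpha (k m : nat) : nat :=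
  #|[set t : {ffun 'I_k -> 'I_m.+1} |
      [forall i, 2 <= t i] && (\prod_(i < k) (t i : nat) == m)]|.

(* Splitting off the first factor gives
   [alpha (i+1) m = sum_(d | m, d > 1) alpha i (m/d)].  Since [d -> m/d] permutes the
   divisors of [m] and the term [d = 1] of [sum_(d | m) alpha i (m/d)] is [alpha i m],
   [sum_(d | m) alpha i d = alpha (i+1) m + alpha i m]; the alternating sum of these
   consecutive pairs telescopes. *)

From mathcomp Require Import all_boot all_order all_algebra zify.
Import GRing.Theory.

Set Implicit Arguments.
Unset Strict Implicit.
Unset Printing Implicit Defensive.

Lemma perm_divisors_div m :
  0 < m -> perm_eq [seq m %/ d | d <- divisors m] (divisors m).
Proof.
move=> m_gt0; have divK d : d %| m -> m %/ (m %/ d) = d.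
  by move=> dv; rewrite divnA // mulKn.
apply: uniq_perm; last first.
- move=> d; rewrite -dvdn_divisors //; apply/mapP/idP => [[e e_in ->]|d_dv].
    by rewrite dvdn_div // dvdn_divisors.
  by exists (m %/ d); rewrite ?divK // -dvdn_divisors ?dvdn_div.
- exact: divisors_uniq.
- rewrite map_inj_in_uniq ?divisors_uniq // => d e; rewrite -!dvdn_divisors //.
  by move=> d_dv e_dv /(congr1 (divn m)); rewrite !divK.
Qed.

Lemma big_divisors_div R (idx : R) (op : Monoid.com_law idx) m (F : nat -> R) :
  0 < m ->
  \big[op/idx]_(d <- divisors m) F (m %/ d) = \big[op/idx]_(d <- divisors m) F d.
Proof.
by move=> m_gt0; rewrite -(big_map (divn m) xpredT); apply/perm_big/perm_divisors_div.
Qed.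

Lemma big_ord_dvdn R (idx : R) (op : Monoid.com_law idx) N m (F : nat -> R) :
  0 < m -> m <= N ->
  \big[op/idx]_(x < N.+1 | x %| m) F x = \big[op/idx]_(d <- divisors m) F d.
Proof.
move=> m_gt0 le_mN; rewrite -(big_mkord (dvdn^~ m)) -big_filter.
apply/perm_big/uniq_perm; rewrite ?filter_uniq ?iota_uniq ?divisors_uniq //.
move=> d; rewrite mem_filter mem_iota -dvdn_divisors // add0n ltnS leq0n /=.
have [d_dv|_] := boolP (d %| m); rewrite ?andbF ?andbT //.
exact: leq_trans (dvdn_leq m_gt0 d_dv) le_mN.
Qed.

Section FfunCons.
Variables (T : finType) (k : nat).

Definition ffun_cons (p : T * {ffun 'I_k -> T}) : {ffun 'I_k.+1 -> T} :=
  [ffun i => if unlift ord0 i is Some j then p.2 j else p.1].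

Lemma ffun_cons0 p : ffun_cons p ord0 = p.1.
Proof. by rewrite ffunE unlift_none. Qed.

Lemma ffun_consS p j : ffun_cons p (lift ord0 j) = p.2 j.
Proof. by rewrite ffunE liftK. Qed.

Lemma ffun_cons_bij : bijective ffun_cons.
Proof.
exists (fun t : {ffun 'I_k.+1 -> T} => (t ord0, [ffun j => t (lift ord0 j)])).
  move=> [x u]; rewrite ffun_cons0; congr (_, _).
  by apply/ffunP => j; rewrite ffunE ffun_consS.
move=> t; apply/ffunP => i; rewrite ffunE /=.
by case: unliftP => [j ->|->]; rewrite ?ffunE.
Qed.

End FfunCons.

(* Bounding the factors by a separate [N] keeps the recursion on [k] inside a
   single type; [count_factorizations_bound] shows the bound is irrelevant once
   [m <= N]. *)
Definition count_factorizations N k m :=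
  \sum_(t : {ffun 'I_k -> 'I_N.+1})
     ([forall i, 2 <= t i] && (\prod_(i < k) (t i : nat) == m) : nat).

Lemma alpha_count_factorizations k m : alpha k m = count_factorizations m k m.
Proof.
rewrite /alpha -sum1_card big_mkcond; apply: eq_bigr => t _.
by rewrite inE; case: (_ && _).
Qed.

Lemma count_factorizations0 N m : count_factorizations N 0 m = (m == 1).
Proof.
rewrite /count_factorizations (eq_bigr (fun _ => (m == 1) : nat)).
  by rewrite sum_nat_const card_ffun !card_ord expn0 mul1n.
by move=> t _; rewrite big_ord0 eq_sym; case: forallP => // -[] [].
Qed.

Lemma count_factorizationsS_ord N k m :
  count_factorizations N k.+1 m =
  \sum_(x < N.+1) ((2 <= x) && (x %| m)) * count_factorizations N k (m %/ x).
Proof.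
rewrite /count_factorizations.
rewrite (reindex (@ffun_cons _ k)); last exact/onW_bij/ffun_cons_bij.
rewrite -(pair_bigA _ (fun (x : 'I_N.+1) (u : {ffun 'I_k -> 'I_N.+1}) =>
   ([forall i, 2 <= ffun_cons (x, u) i]
   && (\prod_(i < k.+1) (ffun_cons (x, u) i : nat) == m) : nat))) /=.
apply: eq_bigr => x _; rewrite big_distrr; apply: eq_bigr => u _ /=.
have ge2_cons : [forall i, 2 <= ffun_cons (x, u) i] = (2 <= x) && [forall j, 2 <= u j].
  apply/forallP/andP => [ge2|[x_ge2 /forallP u_ge2] i].
    split; first by have := ge2 ord0; rewrite ffun_cons0.
    by apply/forallP => j; have := ge2 (lift ord0 j); rewrite ffun_consS.
  by rewrite ffunE; case: unliftP.
rewrite ge2_cons big_ord_recl ffun_cons0.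
rewrite (eq_bigr (fun i => (u i : nat))) => [/=|i _]; last by rewrite ffun_consS.
case: (leqP 2 x) => x_ge2 //=; have x_gt0 : 0 < x by apply: leq_trans x_ge2.
have [x_dv|x_ndv] /= := boolP (x %| m).
  by rewrite mul1n -{1}(divnK x_dv) (mulnC (m %/ x)) eqn_pmul2l.
suff /negbTE-> : x * \prod_(i < k) (u i : nat) != m by rewrite andbF.
by apply: contra x_ndv => /eqP <-; apply: dvdn_mulr.
Qed.

Lemma count_factorizationsS N k m : 0 < m -> m <= N ->
  count_factorizations N k.+1 m =
  \sum_(d <- divisors m | d != 1) count_factorizations N k (m %/ d).
Proof.
move=> m_gt0 le_mN; rewrite count_factorizationsS_ord [RHS]big_mkcond.
pose G d := if d != 1 then count_factorizations N k (m %/ d) else 0.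
rewrite -(big_ord_dvdn _ G m_gt0 le_mN) [RHS]big_mkcond.
apply: eq_bigr => -[x /= _] _; have [x_dv|] := boolP (x %| m); last by rewrite andbF.
have x_gt0 := dvdn_gt0 m_gt0 x_dv.
by rewrite andbT /G ltn_neqAle eq_sym x_gt0 andbT; case: (x != 1); rewrite ?mul1n.
Qed.

Lemma divisor_divn_bounds m d : 0 < m -> d %| m -> 0 < m %/ d <= m.
Proof.
move=> m_gt0 d_dv; rewrite leq_div andbT.
by rewrite divn_gt0 ?(dvdn_gt0 m_gt0 d_dv) ?(dvdn_leq m_gt0 d_dv).
Qed.

Lemma count_factorizations_bound k m N N' : 0 < m -> m <= N -> m <= N' ->
  count_factorizations N k m = count_factorizations N' k m.
Proof.
elim: k m => [|k IHk] m m_gt0 le_mN le_mN'; first by rewrite !count_factorizations0.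
rewrite [LHS](count_factorizationsS k m_gt0 le_mN).
rewrite [RHS](count_factorizationsS k m_gt0 le_mN').
rewrite big_seq_cond [RHS]big_seq_cond; apply: eq_bigr => d.
rewrite -dvdn_divisors // => /andP[/(divisor_divn_bounds m_gt0)/andP[q_gt0 le_qm] _].
by apply: IHk; rewrite // (leq_trans le_qm).
Qed.

Lemma alphaS k m : 0 < m ->
  alpha k.+1 m = \sum_(d <- divisors m | d != 1) alpha k (m %/ d).
Proof.
move=> m_gt0; rewrite alpha_count_factorizations count_factorizationsS //.
rewrite big_seq_cond [RHS]big_seq_cond; apply: eq_bigr => d.
rewrite -dvdn_divisors // => /andP[/(divisor_divn_bounds m_gt0)/andP[q_gt0 le_qm] _].
by rewrite alpha_count_factorizations; apply: count_factorizations_bound.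
Qed.

Lemma sum_divisors_alpha i m : 0 < m ->
  \sum_(d <- divisors m) alpha i d = alpha i.+1 m + alpha i m.
Proof.
move=> m_gt0; rewrite -big_divisors_div // (bigD1_seq 1) ?divisor1 ?divisors_uniq //=.
by rewrite divn1 alphaS // addnC.
Qed.

Local Open Scope ring_scope.

Lemma alternating_sum_consecutive (R : pzRingType) (c : nat -> R) k : (0 < k)%N ->
  \sum_(1 <= i < k) (-1) ^+ (k - 1 - i)%N * (c i.+1 + c i) = c k + (-1) ^+ k * c 1%N.
Proof.
elim: k => // k IHk _; have [->|k_gt0] := posnP k.
  by rewrite big_geq // expr1 mulN1r addrN.
have shift i : (i < k)%N -> (k.+1 - 1 - i = (k - 1 - i).+1)%N by lia.
rewrite big_nat_recr //= (_ : (k.+1 - 1 - k = 0)%N) ?expr0 ?mul1r; last by lia.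
rewrite (eq_big_nat _ _ (F2 := fun i => - ((-1) ^+ (k - 1 - i)%N * (c i.+1 + c i)))).
  by rewrite sumrN IHk // addrC addrKA exprS mulN1r mulNr.
by move=> i /andP[_ /shift->]; rewrite exprS mulN1r mulNr.
Qed.

Theorem lemma4p2 (k m : nat) (hk : (0 < k)%N) (hm : (0 < m)%N) :
  \sum_(1 <= i < k) (-1) ^+ (k - 1 - i)%N *
      (\sum_(d <- divisors m) (alpha i d)%:Z)
  = (alpha k m)%:Z + (-1) ^+ k * (alpha 1 m)%:Z.
Proof.
rewrite -(alternating_sum_consecutive (fun i => (alpha i m)%:Z) hk).
apply: eq_bigr => i _; congr (_ * _).
by rewrite -(big_morph Posz PoszD (erefl 0%:Z)) sum_divisors_alpha.
Qed.
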